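(* Let $(E,C)$ be a separated graph with $E^0,E^1$ countable, in which all edges have the same source $v_0$, the range map is injective and $E$ has no loops; let $S\subseteq C_{fin}$ and $K$ a field. Then the representation $\pi:AL_K(E,C,S)\to\mathrm{Hom}_K(M)$ arising from a branching system obtained by the construction described in the context is faithful (injective).
   Context: A separated graph is a pair $(E,C)$ where $E=(E^0,E^1,r,s)$ is a directed graph and $C=\bigcup_{v\in E^0}C_v$, where for each non-sink $v$, $C_v$ is a partition of $s^{-1}(v)$ into pairwise disjoint nonempty sets; $C_{fin}$ is the set of finite $Y\in C$. The Cohn-Leavitt algebra $L_K(E,C,S)$ is the universal $K$-algebra generated by pairwise orthogonal idempotents $\{v:v\in E^0\}$ and elements $\{e,e^*:e\in E^1\}$ subject to: $s(e)e=er(e)=e$; $r(e)e^*=e^*s(e)=e^*$; $e^*f=\delta_{e,f}r(e)$ for $e,f\in Y$, $Y\in C$; $v=\sum_{e\in X}ee^*$ for every $X\in S\cap C_v$, $v$ non-sink. The abelianized Cohn-Leavitt algebra $AL_K(E,C,S)$ is the quotient of $L_K(E,C,S)$ by the ideal generated by all $\lambda\lambda^*\beta\beta^*-\beta\beta^*\lambda\lambda^*$ with $\lambda,\beta$ in the multiplicative semigroup generated by $E^1\cup(E^1)^*$. Construction of the branching system: enumerate $E^0=\{w_0,w_1,\dots\}$ and put $D_{w_i}=[i,i+1)\subseteq\mathbb{R}$, $\mathfrak{X}=\bigcup_i D_{w_i}$. For each non-sink $v$ enumerate $C_v=\{Y_1,Y_2,\dots\}$ and let $\widetilde{Y_j}=Y_j\cup\{\text{one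 extra symbol}\}$ if $Y_j\notin S$ and $\widetilde{Y_j}=Y_j$ if $Y_j\in S$. Partition $D_v$ into $|\widetilde{Y_1}|$ left-closed right-open intervals indexed by $\widetilde{Y_1}$, and for $e\in Y_1$ let $R_e$ be the interval indexed by $e$. Inductively, given the (countable) partition of $D_v$ into left-closed right-open intervals obtained at stage $n$, partition each of its intervals into $|\widetilde{Y_{n+1}}|$ left-closed right-open intervals indexed by $\widetilde{Y_{n+1}}$, and for $e\in Y_{n+1}$ let $R_e$ be the union of all subintervals indexed by $e$. For each $e\in E^1$, $R_e$ is a disjoint union of countably many left-closed right-open intervals $\{J_k\}_{k\in\Delta}$; partition $D_{r(e)}$ into $|\Delta|$ left-closed right-open intervals $\{D_k\}_{k\in\Delta}$, choose bijections $D_k\to J_k$, and let $f_e:D_{r(e)}\to R_e$ be the resulting bijection. $M$ is the $K$-module of all functions $\mathfrak{X}\to K$, and $\pi$ is the algebra homomorphism (well defined on $AL_K(E,C,S)$) determined by $\pi(v)\phi=\chi_{D_v}\phi$, $\pi(e)\phi=$ the function equal to $\phi(f_e^{-1}(x))$ on $R_e$ and $0$ elsewhere, $\pi(e^* )\phi=$ the function equal to $\phi(f_e(x))$ on $D_{r(e)}$ and $0$ elsewhere. *)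

From HB Require Import structures.
From mathcomp Require Import all_boot all_order all_algebra.
From Stdlib Require Import Reals ClassicalEpsilon.

Set Implicit Arguments.
Unset Strict Implicit.
Unset Printing Implicit Defensive.

Import GRing.Theory.
Local Open Scope ring_scope.

(* The partition C is given by a labelling [cl : Ed -> Cl]: the sets of *)
(* C are the (nonempty) fibres of [cl] (cl is required surjective) and  *)
(* each fibre lies in s^{-1}(v) for a single v (so it belongs to C_v).  *)
Record sepgraph (V Ed Cl : Type) := SepGraph {
  src : Ed -> V;
  rng : Ed -> V;
  cl  : Ed -> Cl }.

Definition is_sepgraph (V Ed Cl : Type) (G : sepgraph V Ed Cl) : Prop :=
  (forall Y : Cl, exists e, cl G e = Y) /\
  (forall e e' : Ed, cl G e = cl G e' -> src G e = src G e').

Definition fin_block (V Ed : Type) (Cl : Type) (G : sepgraph V Ed Cl)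
  (Y : Cl) : Prop :=
  exists l : list Ed, forall e, cl G e = Y <-> List.In e l.

Inductive gen (V Ed : Type) := GV of V | GE of Ed | GS of Ed.

(* a formal noncommutative polynomial without constant term:            *)
(* a finite list of (coefficient, nonempty word in the generators).     *)
Definition ncpoly (K : Type) (V Ed : Type) := seq (K * seq (gen V Ed)).

Definition no_const_term (K V Ed : Type) (p : ncpoly K V Ed) : bool :=
  all (fun cw => ~~ nilp cw.2) p.

Section Interp.
Variables (K : fieldType) (A : algType K) (V Ed : Type).
Variables (gv : V -> A) (ge gs : Ed -> A).

Definition interp_gen (g : gen V Ed) : A :=
  match g with GV v => gv v | GE e => ge e | GS e => gs e end.

Definition interp_poly (p : ncpoly K V Ed) : A :=
  \sum_(cw <- p) cw.1 *: \prod_(g <- cw.2) interp_gen g.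

(* paths: words in E^1 ∪ (E^1)^*; (true, e) = e, (false, e) = e^*. *)
Definition interp_path (l : seq (bool * Ed)) : A :=
  \prod_(x <- l) (if x.1 then ge x.2 else gs x.2).
End Interp.

Definition path_star (Ed : Type) (l : seq (bool * Ed)) : seq (bool * Ed) :=
  rev (map (fun x => (~~ x.1, x.2)) l).

Definition AL_model (K : fieldType) (A : algType K) (V : eqType)
  (Ed : eqType) (Cl : Type) (G : sepgraph V Ed Cl) (S : Cl -> Prop)
  (gv : V -> A) (ge gs : Ed -> A) : Prop :=
  (forall v, gv v * gv v = gv v) /\
  (forall v w, v != w -> gv v * gv w = 0) /\
  (forall e, gv (src G e) * ge e = ge e) /\
  (forall e, ge e * gv (rng G e) = ge e) /\
  (forall e, gv (rng G e) * gs e = gs e) /\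
  (forall e, gs e * gv (src G e) = gs e) /\
  (forall e f, cl G e = cl G f ->
     gs e * ge f = (if e == f then gv (rng G e) else 0)) /\
  (forall (Y : Cl), S Y -> forall l : seq Ed, uniq l ->
     (forall e, (e \in l) <-> cl G e = Y) ->
     forall e0, cl G e0 = Y ->
       gv (src G e0) = \sum_(e <- l) ge e * gs e) /\
  (forall lam bet : seq (bool * Ed), lam != [::] -> bet != [::] ->
     interp_path ge gs lam * interp_path ge gs (path_star lam)
       * interp_path ge gs bet * interp_path ge gs (path_star bet)
     = interp_path ge gs bet * interp_path ge gs (path_star bet)
       * interp_path ge gs lam * interp_path ge gs (path_star lam)).

(* p = 0 in AL_K(E,C,S): by the universal property, p vanishes in every  *)
(* (unital; AL embeds in its unitization) K-algebra model of the relations *)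
Definition zero_in_AL (K : fieldType) (V Ed : eqType) (Cl : Type)
  (G : sepgraph V Ed Cl) (S : Cl -> Prop) (p : ncpoly K V Ed) : Prop :=
  forall (A : algType K) (gv : V -> A) (ge gs : Ed -> A),
    AL_model G S gv ge gs -> interp_poly gv ge gs p = 0.

Definition Dv (V : Type) (idx : V -> nat) (v : V) : R -> Prop :=
  fun x => Rle (INR (idx v)) x /\ Rlt x (Rplus (INR (idx v)) R1).

Definition lcro (J : R -> Prop) : Prop :=
  exists a b, Rlt a b /\ forall x, J x <-> (Rle a x /\ Rlt x b).

Definition lcro_partition (I : Type) (P : I -> Prop) (J : I -> R -> Prop)
  (D : R -> Prop) : Prop :=
  (forall i, P i -> lcro (J i)) /\
  (forall i j x, P i -> P j -> J i x -> J j x -> i = j) /\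
  (forall x, D x <-> exists i, P i /\ J i x).

(* data produced by the construction:
   - idx : the enumeration E^0 = {w_0, w_1, ...} (w_{idx v} = v);
   - bidx : the enumeration C_v = {Y_1, Y_2, ...} (Y = Y_{bidx Y + 1});
   - itv v t : the interval of D_v at stage (size t) with address
     t = [t_1; ...; t_n], t_j in Ytilde_j (Some e = e, None = extra symbol);
   - dk e t : the intervals D_k partitioning D_{r(e)};
   - fe e = f_e, ge e = its inverse R_e -> D_{r(e)}. *)
Record bdata (V Ed Cl : Type) := BData {
  idx  : V -> nat;
  bidx : Cl -> nat;
  itv  : V -> seq (option Ed) -> R -> Prop;
  dk   : Ed -> seq (option Ed) -> R -> Prop;
  fe   : Ed -> R -> R;
  gi   : Ed -> R -> R }.

Section Construction.
Variables (V Ed Cl : Type) (G : sepgraph V Ed Cl) (S : Cl -> Prop)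
  (B : bdata V Ed Cl).

(* t is an address at vertex v: its j-th entry lies in Ytilde_{j+1} *)
Definition valid_addr (v : V) (t : seq (option Ed)) : Prop :=
  forall j : nat, leq j.+1 (size t) ->
    match nth None t j with
    | Some e => src G e = v /\ bidx B (cl G e) = j
    | None => exists e, src G e = v /\ bidx B (cl G e) = j /\ ~ S (cl G e)
    end.

Definition Re (e : Ed) : R -> Prop := fun x =>
  exists t, valid_addr (src G e) t /\ size t = bidx B (cl G e) /\
            itv B (src G e) (rcons t (Some e)) x.

Definition is_construction : Prop :=
  (forall v w, idx B v = idx B w -> v = w) /\
  (forall v (n : nat), leq n.+1 (idx B v) -> exists w, idx B w = n) /\
  (forall e e', src G e = src G e' -> bidx B (cl G e) = bidx B (cl G e') ->
     cl G e = cl G e') /\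
  (forall e (j : nat), leq j.+1 (bidx B (cl G e)) ->
     exists e', src G e' = src G e /\ bidx B (cl G e') = j) /\
  (forall v x, itv B v [::] x <-> Dv (idx B) v x) /\
  (forall v t, valid_addr v t ->
     (exists e, src G e = v /\ bidx B (cl G e) = size t) ->
     lcro_partition (fun a => valid_addr v (rcons t a))
                    (fun a => itv B v (rcons t a)) (itv B v t)) /\
  (forall e, lcro_partition
     (fun t => valid_addr (src G e) t /\ size t = bidx B (cl G e))
     (dk B e) (Dv (idx B) (rng G e))) /\
  (forall e t, valid_addr (src G e) t -> size t = bidx B (cl G e) ->
     (forall x, dk B e t x -> itv B (src G e) (rcons t (Some e)) (fe B e x)) /\
     (forall x, dk B e t x -> gi B e (fe B e x) = x) /\
     (forall y, itv B (src G e) (rcons t (Some e)) y ->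
        dk B e t (gi B e y) /\ fe B e (gi B e y) = y)).

Definition Xsp : R -> Prop := fun x => exists v, Dv (idx B) v x.

Definition chi (P : R -> Prop) (x : R) : bool :=
  if excluded_middle_informative (P x) then true else false.

Variable K : fieldType.

(* the representation pi on generators, acting on M = functions X -> K *)
Definition pi_gen (g : gen V Ed) (phi : R -> K) : R -> K := fun x =>
  match g with
  | GV v => if chi (Dv (idx B) v) x then phi x else 0
  | GE e => if chi (Re e) x then phi (gi B e x) else 0
  | GS e => if chi (Dv (idx B) (rng G e)) x then phi (fe B e x) else 0
  end.

Definition pi_word (w : seq (gen V Ed)) (phi : R -> K) : R -> K :=
  foldr pi_gen phi w.

Definition pi_poly (p : ncpoly K V Ed) (phi : R -> K) : R -> K := fun x =>
  \sum_(cw <- p) cw.1 * pi_word cw.2 phi x.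

Definition pi_zero (p : ncpoly K V Ed) : Prop :=
  forall (phi : R -> K) x, Xsp x -> pi_poly p phi x = 0.
End Construction.

(* Since every edge leaves v0, ranges are injective and there are no loops, the relations
   rewrite every word in the generators to 0, to a vertex w that is neither v0 nor a range
   (isolated), or to a "cell" a^* q_e1 ... q_en b with q_e = e e^* and optional outer edges
   a, b.  Grouping the monomials of p by w, resp. by (a, b), it suffices that each group
   vanishes in every model A of the relations.  An isolated w is detected by evaluating
   pi(p) on the indicator of a point of D_w.  In a group (a, b) the commuting idempotents
   q_e are expanded along the truth assignments of the finitely many edges involved:
   inconsistent assignments give 0 in A (orthogonality inside a block of C, the relation
   v0 = sum e e^* for blocks in S), and every consistent assignment is realised by a point
   y of D_v0 lying in exactly the prescribed sets R_e, because the construction refines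
   D_v0 block by block.  Evaluating pi(p) on the indicator of f_b^{-1}(y) at f_a^{-1}(y)
   then returns the sum of the coefficients of the cells true at y, which is 0. *)

From Pilot Require Import Defs.
From HB Require Import structures.
From mathcomp Require Import all_boot all_order all_algebra.
From Stdlib Require Import Reals Lra Classical ClassicalEpsilon.
From Stdlib Require Import ProofIrrelevance FunctionalExtensionality.

Set Implicit Arguments.
Unset Strict Implicit.
Unset Printing Implicit Defensive.

Import GRing.Theory.

(* [NCell a Q b] stands for [a^* v0 q_e1 ... q_en b] where [Q = [:: e1; ...; en]],
   [q_e = e e^*], and an absent [a] or [b] is omitted. *)
Inductive nf (V Ed : Type) :=
  | NZero
  | NIso of V
  | NCell of option Ed & seq Ed & option Ed.
Arguments NZero {V Ed}.
Arguments NIso {V Ed}.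
Arguments NCell {V Ed}.

Section NormalForm.
Variables (V Ed : eqType) (v0 : V) (rinv : V -> option Ed).

(* [rinv v] is an edge with range [v], if any: such a vertex is the cell [e^* v0 e]. *)
Definition nf_of_gen (g : gen V Ed) : nf V Ed :=
  match g with
  | GV v => if v == v0 then NCell None [::] None else
      if rinv v is Some e then NCell (Some e) [::] (Some e) else NIso v
  | GE e => NCell None [::] (Some e)
  | GS e => NCell (Some e) [::] None
  end.

Definition nf_mul (x y : nf V Ed) : nf V Ed :=
  match x, y with
  | NIso w, NIso w' => if w == w' then NIso w else NZero
  | NCell a Q None, NCell None Q' b => NCell a (Q ++ Q') b
  | NCell a Q (Some f), NCell (Some g) Q' b =>
      if f == g then NCell a (Q ++ f :: Q') b else NZero
  | _, _ => NZero
  end.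

Fixpoint nf_of_word (g : gen V Ed) (t : seq (gen V Ed)) : nf V Ed :=
  if t is h :: t' then nf_mul (nf_of_gen g) (nf_of_word h t') else nf_of_gen g.

Definition nf_wf (n : nf V Ed) : bool :=
  if n is NIso w then (w != v0) && (rinv w == None) else true.

Lemma nf_mul_wf x y : nf_wf x -> nf_wf (nf_mul x y).
Proof.
case: x => [|w|a Q [f|]] //=; case: y => [|w'|[g|] Q' b] //=.
- by case: (w == w').
- by case: (f == g).
Qed.

Lemma nf_of_gen_wf g : nf_wf (nf_of_gen g).
Proof.
case: g => [v|e|e] //=; case: eqP => [//|/eqP ne].
by case E: (rinv v) => //=; rewrite ne E.
Qed.

Lemma nf_of_word_wf g t : nf_wf (nf_of_word g t).
Proof. by case: t => [|h t] /=; [|apply: nf_mul_wf]; apply: nf_of_gen_wf. Qed.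

Definition cell_edges (a : option Ed) (Q : seq Ed) (b : option Ed) : seq Ed :=
  seq_of_opt a ++ Q ++ seq_of_opt b.

(* Values in any semigroup with zero satisfying the single-source relations: both the
   algebra models of AL and the operators of pi are instances. *)
Section Eval.
Variables (M : Type) (mul : M -> M -> M) (z : M).
Local Infix "**" := mul (at level 40, left associativity).
Hypothesis mulA : associative mul.
Hypothesis mulz : right_zero z mul.
Hypothesis zmul : left_zero z mul.
Variables (rng : Ed -> V) (gv : V -> M) (ge gs : Ed -> M).
Hypothesis rinv_some : forall v e, rinv v = Some e -> rng e = v.
Hypothesis rinv_none : forall v, rinv v = None -> forall e, rng e != v.
Hypothesis rng_neq_v0 : forall e, rng e != v0.
Hypothesis rng_inj : injective rng.
Hypothesis vert_idem : forall v, gv v ** gv v = gv v.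
Hypothesis vert_orth : forall v w, v != w -> gv v ** gv w = z.
Hypothesis src_edge : forall e, gv v0 ** ge e = ge e.
Hypothesis edge_rng : forall e, ge e ** gv (rng e) = ge e.
Hypothesis rng_star : forall e, gv (rng e) ** gs e = gs e.
Hypothesis star_src : forall e, gs e ** gv v0 = gs e.
Hypothesis star_edge : forall e, gs e ** ge e = gv (rng e).

Fixpoint projs (Q : seq Ed) : M :=
  if Q is e :: Q' then (ge e ** gs e) ** projs Q' else gv v0.

Definition star_l (a : option Ed) (x : M) : M :=
  if a is Some e then gs e ** x else x.

Definition edge_r (b : option Ed) (x : M) : M :=
  if b is Some f then x ** ge f else x.

Definition nf_val (n : nf V Ed) : M :=
  match n with
  | NZero => z
  | NIso w => gv w
  | NCell a Q b => star_l a (edge_r b (projs Q))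
  end.

Definition gen_val (g : gen V Ed) : M :=
  match g with GV v => gv v | GE e => ge e | GS e => gs e end.

Fixpoint word_val (g : gen V Ed) (t : seq (gen V Ed)) : M :=
  if t is h :: t' then gen_val g ** word_val h t' else gen_val g.

Lemma v0_projs Q : gv v0 ** projs Q = projs Q.
Proof. case: Q => [|e Q] /=; first exact: vert_idem. by rewrite !mulA src_edge. Qed.

Lemma projs_v0 Q : projs Q ** gv v0 = projs Q.
Proof. elim: Q => [|e Q IH] /=; first exact: vert_idem. by rewrite -mulA IH. Qed.

Lemma projs_cat Q Q' : projs Q ** projs Q' = projs (Q ++ Q').
Proof. elim: Q => [|e Q IH] /=; first exact: v0_projs. by rewrite -mulA IH. Qed.

Lemma star_lM a x y : star_l a x ** y = star_l a (x ** y).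
Proof. by case: a => //= e; rewrite mulA. Qed.

Lemma edge_rM b x y : x ** edge_r b y = edge_r b (x ** y).
Proof. by case: b => //= f; rewrite mulA. Qed.

Lemma star_l0 a : star_l a z = z.
Proof. by case: a => //= e; rewrite mulz. Qed.

Lemma edge_r0 b : edge_r b z = z.
Proof. by case: b => //= e; rewrite zmul. Qed.

Lemma edge_star_neq f g : f != g -> ge f ** gs g = z.
Proof.
move=> ne; rewrite -edge_rng -rng_star mulA -(mulA (ge f)) vert_orth ?mulz ?zmul //.
by apply: contra ne => /eqP/rng_inj ->.
Qed.

Lemma edge_v0 f : ge f ** gv v0 = z.
Proof. by rewrite -edge_rng -mulA vert_orth ?mulz. Qed.

Lemma v0_star g : gv v0 ** gs g = z.
Proof. by rewrite -rng_star mulA vert_orth ?zmul // eq_sym. Qed.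

Lemma iso_mull n w : nf_wf n -> w != v0 -> (forall e, rng e != w) ->
  gv w ** nf_val n = if n is NIso w' then (if w == w' then gv w else z) else z.
Proof.
case: n => [|w'|[e|] Q b] /= _ Hw Hr; first exact: mulz.
- by case: eqP => [<-|/eqP]; [exact: vert_idem | exact: vert_orth].
- by rewrite -rng_star -mulA mulA vert_orth ?zmul // eq_sym.
- by rewrite -v0_projs edge_rM mulA vert_orth ?zmul ?edge_r0.
Qed.

Lemma iso_mulr n w : nf_wf n -> w != v0 -> (forall e, rng e != w) ->
  nf_val n ** gv w = if n is NIso w' then (if w' == w then gv w else z) else z.
Proof.
case: n => [|w'|a Q [f|]] /= _ Hw Hr; first exact: zmul.
- by case: eqP => [->|/eqP]; [exact: vert_idem | exact: vert_orth].
- by rewrite star_lM -edge_rng -!mulA vert_orth ?mulz ?star_l0.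
- by rewrite star_lM -projs_v0 -mulA vert_orth ?mulz ?star_l0 // eq_sym.
Qed.

Lemma nf_mulP x y : nf_wf x -> nf_wf y -> nf_val x ** nf_val y = nf_val (nf_mul x y).
Proof.
case: x => [|w|a Q b] Hx Hy; first by rewrite /= zmul.
  case/andP: Hx => Hw /eqP/rinv_none Hr.
  by rewrite /= iso_mull //; case: y Hy => //= w'; case: (w == w').
case: y Hy => [|w|a' Q' b'] Hy; first by rewrite /= mulz; case: b Hx.
  by case/andP: Hy => Hw /eqP/rinv_none Hr; rewrite iso_mulr //; case: b Hx.
clear Hx Hy; rewrite /= star_lM; case: b => [f|]; case: a' => [g|] /=.
- rewrite edge_rM; case: eqP => [<-|/eqP ne] /=.
    by rewrite edge_rM -projs_cat /= !mulA.
  by rewrite -edge_rM mulA -(mulA (projs Q)) edge_star_neq // mulz !zmul star_l0.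
- by rewrite -(v0_projs Q') -edge_rM mulA -(mulA (projs Q)) edge_v0 mulz !zmul star_l0.
- by rewrite -(projs_v0 Q) -mulA (mulA (gv v0)) v0_star zmul mulz star_l0.
- by rewrite edge_rM projs_cat.
Qed.

Lemma nf_of_genP g : nf_val (nf_of_gen g) = gen_val g.
Proof.
case: g => [v|e|e] /=; last by rewrite star_src.
  case: eqP => [->|_] //; case E: (rinv v) => [e|] //=.
  by rewrite src_edge star_edge (rinv_some E).
by rewrite src_edge.
Qed.

Lemma nf_of_wordP g t : nf_val (nf_of_word g t) = word_val g t.
Proof.
elim: t g => [|h t IH] g /=; first exact: nf_of_genP.
by rewrite -nf_mulP ?nf_of_gen_wf ?nf_of_word_wf // nf_of_genP IH.
Qed.

Lemma projs_rcons_edge Q f : projs (rcons Q f) ** ge f = projs Q ** ge f.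
Proof.
by rewrite -cats1 -projs_cat /= -!mulA src_edge star_edge edge_rng.
Qed.

(* The outer edges of a cell may be repeated inside it: [a^* = a^* q_a] and [b = q_b b]. *)
Lemma nf_val_cell a Q b :
  nf_val (NCell a Q b) = star_l a (edge_r b (projs (cell_edges a Q b))).
Proof.
rewrite /= /cell_edges catA; case: b => [f|] /=; first rewrite cats1 projs_rcons_edge.
all: by case: a => [e|] /=; rewrite ?cats0 // !mulA star_edge rng_star.
Qed.
End Eval.
End NormalForm.

(* A truth assignment to edges: [(e, true)] puts a point inside [R_e], [(e, false)]
   outside it. *)
Section Assignments.
Variables (V Ed Cl : eqType) (G : sepgraph V Ed Cl) (S : Cl -> Prop).

Definition holds (D : seq (Ed * bool)) e := (e, true) \in D.
Definition decided (D : seq (Ed * bool)) e := ((e, true) \in D) || ((e, false) \in D).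

Definition consistent (D : seq (Ed * bool)) : Prop :=
  (forall e f, holds D e -> holds D f -> cl G e = cl G f -> e = f) /\
  (forall Y, S Y -> (forall e, cl G e = Y -> decided D e) ->
     exists e, cl G e = Y /\ holds D e).
End Assignments.

Lemma seq_choice (T : Type) (x0 : T) (P : nat -> T -> Prop) N :
  (forall j, j < N -> exists a, P j a) ->
  exists t, size t = N /\ forall j, j < N -> P j (nth x0 t j).
Proof.
elim: N => [|N IH] H; first by exists [::].
case: IH => [j Hj|t [Hs Ht]]; first exact/H/ltnW.
case: (H N (ltnSn N)) => a Ha; exists (rcons t a); rewrite size_rcons Hs; split => // j.
rewrite ltnS leq_eqVlt nth_rcons Hs => /orP [/eqP ->|Hj]; first by rewrite ltnn eqxx.
by rewrite Hj; apply: Ht.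
Qed.

Section Cells.
Variables (V Ed Cl : countType) (G : sepgraph V Ed Cl) (S : Cl -> Prop) (B : bdata V Ed Cl).
Hypothesis HC : is_construction G S B.
Local Notation valid := (valid_addr G S B).
Local Notation itv := (itv B).
Local Notation D := (Dv (idx B)).
Local Notation Re := (Re G S B).

Lemma valid_cat v t s : valid v (t ++ s) -> valid v t.
Proof.
move=> H j Hj; have := H j; rewrite size_cat nth_cat Hj.
by apply; apply: leq_trans Hj (leq_addr _ _).
Qed.

Lemma valid_rcons v t a : valid v (rcons t a) -> valid v t.
Proof. by rewrite -cats1; apply: valid_cat. Qed.

Lemma valid_rcons_block v t a : valid v (rcons t a) ->
  exists e, src G e = v /\ bidx B (cl G e) = size t.
Proof.
move/(_ (size t)); rewrite size_rcons nth_rcons ltnn eqxx => /(_ (leqnn _)).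
by case: a => [e [He1 He2]|[e [He1 [He2 _]]]]; exists e.
Qed.

Lemma valid_rcons_some v t e : valid v t -> src G e = v -> bidx B (cl G e) = size t ->
  valid v (rcons t (Some e)).
Proof.
move=> H He Hb j; rewrite size_rcons ltnS nth_rcons leq_eqVlt => /orP [/eqP ->|Hj].
  by rewrite ltnn eqxx.
by rewrite Hj; apply: H.
Qed.

Lemma itv_rcons v t a x : valid v (rcons t a) -> itv v (rcons t a) x -> itv v t x.
Proof.
move=> Hv Hx; case: HC => _ [_ [_ [_ [_ [Hst _]]]]].
case: (Hst v t (valid_rcons Hv) (valid_rcons_block Hv)) => _ [_ Hcov].
by apply/Hcov; exists a.
Qed.

Lemma itv_cat v t s x : valid v (t ++ s) -> itv v (t ++ s) x -> itv v t x.
Proof.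
elim/last_ind: s => [|s a IH]; first by rewrite cats0.
rewrite -rcons_cat => Hv Hx; apply: IH; first exact: valid_rcons Hv.
exact: itv_rcons Hx.
Qed.

Lemma itv_Dv v t x : valid v t -> itv v t x -> D v x.
Proof.
move=> Hv /(@itv_cat v [::] t x Hv).
by case: HC => _ [_ [_ [_ [H0 _]]]] /H0.
Qed.

Lemma itv_nonempty v t : valid v t -> exists x, itv v t x.
Proof.
elim/last_ind: t => [|t a IH] Hv.
  exists (INR (idx B v)); case: HC => _ [_ [_ [_ [H0 _]]]]; apply/H0.
  by split; [apply: Rle_refl | lra].
case: HC => _ [_ [_ [_ [_ [Hst _]]]]].
case: (Hst v t (valid_rcons Hv) (valid_rcons_block Hv)) => Hlcro _.
case: (Hlcro a Hv) => l [r [Hlr Hiff]]; exists l.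
by apply/Hiff; split; [apply: Rle_refl | exact: Hlr].
Qed.

Lemma itv_uniq v t1 t2 x : valid v t1 -> valid v t2 -> size t1 = size t2 ->
  itv v t1 x -> itv v t2 x -> t1 = t2.
Proof.
elim/last_ind: t1 t2 => [|t1 a IH] t2; first by case: t2.
case/lastP: t2 => [|t2 b]; first by rewrite size_rcons.
rewrite !size_rcons => H1 H2 [Hs] X1 X2.
have E := IH _ (valid_rcons H1) (valid_rcons H2) Hs (itv_rcons H1 X1) (itv_rcons H2 X2).
subst t2; case: HC => _ [_ [_ [_ [_ [Hst _]]]]].
case: (Hst v t1 (valid_rcons H1) (valid_rcons_block H1)) => _ [Hdisj _].
by rewrite (Hdisj a b x H1 H2 X1 X2).
Qed.

Lemma Dv_uniq v w x : D v x -> D w x -> v = w.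
Proof.
have gap m n : m < n -> (INR m + 1 <= INR n)%R by move/leP/le_INR; rewrite S_INR.
move=> [H1 H2] [H3 H4]; case: HC => Hinj _; apply: Hinj.
by case: (ltngtP (idx B v) (idx B w)) => // /gap ?; lra.
Qed.

Lemma Re_Dv e x : Re e x -> D (src G e) x.
Proof.
case=> t [Hv [Hs Hx]]; apply: (itv_Dv (t := rcons t (Some e))) => //.
exact: valid_rcons_some.
Qed.

Lemma Re_gi e x : Re e x -> D (rng G e) (gi B e x) /\ Defs.fe B e (gi B e x) = x.
Proof.
case=> t [Hv [Hs Hx]]; case: HC => _ [_ [_ [_ [_ [_ [Hdk Hfe]]]]]].
case: (Hfe e t Hv Hs) => _ [_ /(_ x Hx) [Hd ->]]; split => //.
by case: (Hdk e) => _ [_ ->]; exists t.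
Qed.

Lemma Dv_fe e x : D (rng G e) x -> Re e (Defs.fe B e x) /\ gi B e (Defs.fe B e x) = x.
Proof.
case: HC => _ [_ [_ [_ [_ [_ [Hdk Hfe]]]]]].
case: (Hdk e) => _ [_ H] /H [t [[Hv Hs] Hx]].
case: (Hfe e t Hv Hs) => H1 [H2 _]; split; last exact: H2.
by exists t; do 2!split => //; apply: H1.
Qed.

Variable v0 : V.
Hypothesis src_v0 : forall e, src G e = v0.

Lemma Re_itvE t e y : valid v0 t -> bidx B (cl G e) < size t -> itv v0 t y ->
  Re e y <-> nth None t (bidx B (cl G e)) = Some e.
Proof.
set k := bidx B (cl G e) => Hv Hk Hy.
have Et : t = take k.+1 t ++ drop k.+1 t by rewrite cat_take_drop.
have Hvk : valid v0 (take k.+1 t) by apply: (@valid_cat _ _ (drop k.+1 t)); rewrite -Et.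
have Hyk : itv v0 (take k.+1 t) y by apply: (@itv_cat _ _ (drop k.+1 t)); rewrite -Et.
rewrite (take_nth None Hk) in Hvk Hyk; split.
  case=> t' [Hv' [Hs' Hy']]; rewrite src_v0 in Hv' Hy'.
  have := itv_uniq (valid_rcons_some Hv' (src_v0 e) (esym Hs')) Hvk _ Hy' Hyk.
  rewrite !size_rcons size_takel ?Hs' ?(ltnW Hk) //.
  by move/(_ erefl)/rcons_inj => [_ <-].
move=> Hn; rewrite Hn in Hvk Hyk; exists (take k t); rewrite src_v0.
by rewrite size_takel ?(ltnW Hk) //; split; first exact: valid_rcons Hvk.
Qed.
(* [valid_addr G S B v0 t] unfolds to [addr_entry j (nth None t j)] for all [j < size t]. *)
Definition addr_entry j (a : option Ed) : Prop :=
  if a is Some e then src G e = v0 /\ bidx B (cl G e) = j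
  else exists e, src G e = v0 /\ bidx B (cl G e) = j /\ ~ S (cl G e).

Section Assignment.
Variables (F : seq Ed) (U : seq (Ed * bool)).
Hypothesis U_F : map fst U = F.
Hypothesis U_consistent : consistent G S U.

Lemma decided_mem e : decided U e = (e \in F).
Proof.
rewrite -U_F /decided; apply/idP/mapP => [/orP []|[[e' b] Hin /= ->]].
- by exists (e, true).
- by exists (e, false).
- by case: b Hin => ->; rewrite ?orbT.
Qed.

(* At stage [j] we choose the interval of the edge of [Y_j] that [U] makes true; failing
   that, an edge of [Y_j] outside [F], or else the extra symbol of [Y_j]. *)
Lemma addr_entry_assignment j : (exists e, bidx B (cl G e) = j) ->
  exists a, [/\ addr_entry j a,
    (forall e, e \in F -> holds U e -> bidx B (cl G e) = j -> a = Some e) &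
    (forall e, a = Some e -> e \in F -> holds U e)].
Proof.
case=> ej Hej; case: HC => _ [_ [Hbu _]]; case: U_consistent => Hone Hsome.
have [[e [He Ht Hb]]|Hne] :=
  classic (exists e, [/\ e \in F, holds U e & bidx B (cl G e) = j]).
  exists (Some e); split=> [|e' He' Ht' Hb'|e' [<-] //]; first by rewrite /= src_v0.
  by congr Some; apply: Hone Ht Ht' _; apply: Hbu; rewrite ?src_v0 ?Hb ?Hb'.
have [HS|HnS] := classic (S (cl G ej)); last first.
  exists None; split=> [|e He Ht Hb|//]; first by exists ej.
  by case: Hne; exists e.
have [e [Ce /negP Hnd]] : exists e, cl G e = cl G ej /\ ~~ decided U e.
  apply: NNPP => Hall; case: (Hsome _ HS) => [e Ce|e [Ce Ht]].
    by apply: NNPP => Hnd; apply: Hall; exists e; split => //; apply/negP.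
  by apply: Hne; exists e; split; rewrite -?decided_mem /decided ?Ce //; apply/orP; left.
exists (Some e); split=> [|e' He' Ht' Hb'|e' [<-] HeF].
- by rewrite /= src_v0 Ce.
- by case: Hne; exists e'.
- by case: Hnd; rewrite decided_mem.
Qed.

Lemma realize_assignment :
  exists y, D v0 y /\ forall e, e \in F -> (Re e y <-> holds U e).
Proof.
pose N := \max_(e <- F) (bidx B (cl G e)).+1.
have HN e : e \in F -> bidx B (cl G e) < N.
  by move=> He; apply: (@leq_bigmax_seq _ F xpredT (fun e => (bidx B (cl G e)).+1)).
have Hblock j : j < N -> exists e, bidx B (cl G e) = j.
  move=> jN; have /hasP [e1 _] : has (fun e => j <= bidx B (cl G e)) F.
    apply: contraTT jN => /hasPn Hn; rewrite -leqNgt.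
    by apply/bigmax_leqP_seq => e He _; rewrite ltnNge Hn.
  rewrite leq_eqVlt => /orP [/eqP ->|Hlt]; first by exists e1.
  case: HC => _ [_ [_ [Hbd _]]]; case: (Hbd e1 j Hlt) => e [_ He]; by exists e.
have [t [Hs Ht]] := seq_choice None (fun j jN => addr_entry_assignment (Hblock j jN)).
have Hv : valid v0 t by move=> j; rewrite Hs => /Ht [].
case: (itv_nonempty Hv) => y Hy; exists y; split; first exact: itv_Dv Hy.
move=> e He; have Hk := HN e He; rewrite (Re_itvE Hv _ Hy) ?Hs //.
by case: (Ht _ Hk) => _ Htrue Hsome; split => [/Hsome|/Htrue]; apply.
Qed.
End Assignment.
End Cells.

Local Open Scope ring_scope.

Lemma In_mem (T : eqType) (x : T) (l : seq T) : List.In x l <-> x \in l.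
Proof.
elim: l => [|y l IH] //=; rewrite in_cons; split.
  by case=> [->|/IH ->]; rewrite ?eqxx ?orbT.
by case/orP => [/eqP ->|/IH]; [left|right].
Qed.

Section ALModel.
Variables (V Ed Cl : eqType) (G : sepgraph V Ed Cl) (S : Cl -> Prop).
Variables (K : fieldType) (A : algType K) (gv : V -> A) (ge gs : Ed -> A).
Hypothesis HM : AL_model G S gv ge gs.
Variable v0 : V.
Hypothesis src_v0 : forall e, src G e = v0.
Hypothesis cl_surj : forall Y, exists e, cl G e = Y.
Hypothesis S_fin : forall Y, S Y -> fin_block G Y.

Lemma AL_vert_idem v : gv v * gv v = gv v.
Proof. by case: HM. Qed.

Lemma AL_vert_orth v w : v != w -> gv v * gv w = 0.
Proof. by case: HM => _ [H _]; apply: H. Qed.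

Lemma AL_src_edge e : gv v0 * ge e = ge e.
Proof. by case: HM => _ [_ [H _]]; rewrite -(src_v0 e). Qed.

Lemma AL_edge_rng e : ge e * gv (rng G e) = ge e.
Proof. by case: HM => _ [_ [_ [H _]]]. Qed.

Lemma AL_rng_star e : gv (rng G e) * gs e = gs e.
Proof. by case: HM => _ [_ [_ [_ [H _]]]]. Qed.

Lemma AL_star_src e : gs e * gv v0 = gs e.
Proof. by case: HM => _ [_ [_ [_ [_ [H _]]]]]; rewrite -(src_v0 e). Qed.

Lemma AL_star_block e f : cl G e = cl G f ->
  gs e * ge f = if e == f then gv (rng G e) else 0.
Proof. by case: HM => _ [_ [_ [_ [_ [_ [H _]]]]]]; apply: H. Qed.

Lemma AL_star_edge e : gs e * ge e = gv (rng G e).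
Proof. by rewrite AL_star_block ?eqxx. Qed.

Local Notation projs := (projs v0 *%R gv ge gs).
Local Notation consistent := (consistent G S).

Definition eproj e : A := ge e * gs e.

Lemma eproj_comm e f : eproj e * eproj f = eproj f * eproj e.
Proof.
case: HM => _ [_ [_ [_ [_ [_ [_ [_ Hab]]]]]]].
have := Hab [:: (true, e)] [:: (true, f)] isT isT.
by rewrite /interp_path /path_star /= !big_seq1 /= /eproj !mulrA.
Qed.

Lemma v0_eproj e : gv v0 * eproj e = eproj e.
Proof. by rewrite /eproj mulrA AL_src_edge. Qed.

Lemma eproj_v0 e : eproj e * gv v0 = eproj e.
Proof. by rewrite /eproj -mulrA AL_star_src. Qed.

Lemma eproj_idem e : eproj e * eproj e = eproj e.
Proof. by rewrite /eproj mulrA -(mulrA (ge e)) AL_star_edge AL_edge_rng. Qed.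

Lemma eproj_orth e f : e != f -> cl G e = cl G f -> eproj e * eproj f = 0.
Proof.
move=> ne Ce.
by rewrite /eproj mulrA -(mulrA (ge e)) AL_star_block // (negPf ne) mulr0 mul0r.
Qed.

Definition lit e (b : bool) : A := if b then eproj e else gv v0 - eproj e.

Fixpoint lits (D : seq (Ed * bool)) : A :=
  if D is (e, b) :: D' then lits D' * lit e b else gv v0.

Lemma lit_v0 e b : lit e b * gv v0 = lit e b.
Proof. by case: b => /=; rewrite ?mulrBl ?eproj_v0 ?AL_vert_idem. Qed.

Lemma lit_eproj_comm e b f : lit e b * eproj f = eproj f * lit e b.
Proof.
case: b => /=; first exact: eproj_comm.
by rewrite mulrBl mulrBr v0_eproj eproj_v0 eproj_comm.
Qed.

Lemma lits_v0 D : lits D * gv v0 = lits D.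
Proof. by case: D => [|[e b] D] /=; rewrite ?AL_vert_idem // -mulrA lit_v0. Qed.

Lemma lits_true D e : holds D e -> lits D * eproj e = lits D.
Proof.
elim: D => [|[e' b] D IH] //; rewrite /holds in_cons => /orP [/eqP [<- <-]|H] /=.
  by rewrite -mulrA eproj_idem.
by rewrite -mulrA lit_eproj_comm mulrA IH.
Qed.

Lemma lits_false D e : (e, false) \in D -> lits D * eproj e = 0.
Proof.
elim: D => [|[e' b] D IH] //; rewrite in_cons => /orP [/eqP [<- <-]|H] /=.
  by rewrite -mulrA mulrBl eproj_idem v0_eproj subrr mulr0.
by rewrite -mulrA lit_eproj_comm mulrA IH // mul0r.
Qed.

Lemma lits_projs D Q : all (decided D) Q ->
  lits D * projs Q = if all (holds D) Q then lits D else 0.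
Proof.
elim: Q => [|e Q IH] /=; first by rewrite lits_v0.
case/andP => /orP [Ht|Hf] HQ; rewrite mulrA -/(eproj e).
  by rewrite lits_true // IH // /holds Ht.
rewrite lits_false // mul0r; case Ht: (holds D e) => //=; case: ifP => // _.
by rewrite -(lits_true Ht) lits_false.
Qed.

Lemma lits_two_true D e f :
  holds D e -> holds D f -> e != f -> cl G e = cl G f -> lits D = 0.
Proof.
move=> He Hf ne Ce.
by rewrite -(lits_true He) -(lits_true Hf) -mulrA eproj_orth ?mulr0 // eq_sym.
Qed.

Lemma S_block_sum Y : S Y ->
  exists l : seq Ed, (forall e, (e \in l) = (cl G e == Y)) /\ gv v0 = \sum_(e <- l) eproj e.
Proof.
move=> SY; case: (S_fin SY) (cl_surj Y) => l Hl [e0 He0].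
have Hl' e : (e \in undup l) = (cl G e == Y).
  by rewrite mem_undup; apply/idP/eqP => [/In_mem/Hl|/Hl/In_mem].
exists (undup l); split => //.
case: HM => _ [_ [_ [_ [_ [_ [_ [HS _]]]]]]].
rewrite -(src_v0 e0); apply: (HS Y SY) => //; first exact: undup_uniq.
by move=> e; rewrite Hl'; split => [/eqP|->].
Qed.

Lemma lits_no_true D Y : S Y ->
  (forall e, cl G e = Y -> decided D e) -> (forall e, cl G e = Y -> ~~ holds D e) ->
  lits D = 0.
Proof.
move=> SY Hd Ht; case: (S_block_sum SY) => l [Hl Hsum].
rewrite -lits_v0 Hsum.
rewrite mulr_sumr big_seq big1 // => e; rewrite Hl => /eqP Ce.
case/orP: (Hd e Ce) => H; first by move: (Ht e Ce); rewrite /holds H.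
exact: lits_false.
Qed.

Lemma lits_inconsistent D : ~ consistent D -> lits D = 0.
Proof.
move=> Hn; apply: NNPP => Hne; apply: Hn; split.
  move=> e f He Hf Ce; apply: NNPP => ne; apply: Hne.
  by apply: (lits_two_true He Hf) => //; apply/eqP.
move=> Y SY Hd; apply: NNPP => Hex; apply: Hne.
apply: (lits_no_true SY Hd) => e Ce; apply/negP => Ht; apply: Hex; by exists e.
Qed.

Lemma consistent_eq_mem D1 D2 : D1 =i D2 -> consistent D1 -> consistent D2.
Proof.
rewrite /consistent /holds /decided => E [H1 H2]; split.
  by move=> e f; rewrite -!E; apply: H1.
move=> Y SY Hd; case: (H2 Y SY) => [e Ce|e [Ce Ht]].
  by move: (Hd e Ce); rewrite !E.
by exists e; rewrite -E.
Qed.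

Definition true_coef_sum (U : seq (Ed * bool)) (L : seq (K * seq Ed)) : K :=
  \sum_(i <- L) (if all (holds U) i.2 then i.1 else 0).

(* Split [lits D] along [lit e true + lit e false] for every edge [e] of [F]; the pieces
   with inconsistent assignments vanish, the others reduce to coefficient sums. *)
Lemma lits_sum_projs_eq0 (L : seq (K * seq Ed)) F D :
  (forall i, i \in L -> forall e, e \in i.2 -> (e \in F) || decided D e) ->
  (forall U, map fst U = F -> consistent (U ++ D) -> true_coef_sum (U ++ D) L = 0) ->
  lits D * \sum_(i <- L) i.1 *: projs i.2 = 0.
Proof.
elim: F D => [|e F IH] D HL HU.
  rewrite mulr_sumr big_seq.
  rewrite (eq_bigr (fun i => (if all (holds D) i.2 then i.1 else 0) *: lits D)); last first.
    move=> i Hi; rewrite -scalerAr lits_projs; last by apply/allP => e /(HL i Hi).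
    by case: ifP => _; rewrite ?scale0r ?scaler0.
  rewrite -scaler_suml -big_seq; case: (classic (consistent D)) => Hc.
    by move: (HU [::] erefl Hc); rewrite /true_coef_sum /= => ->; rewrite scale0r.
  by rewrite lits_inconsistent // scaler0.
have -> : lits D = lits ((e, true) :: D) + lits ((e, false) :: D).
  by rewrite /= -mulrDr addrC subrK lits_v0.
suff Hb b : lits ((e, b) :: D) * \sum_(i <- L) i.1 *: projs i.2 = 0.
  by rewrite mulrDl !Hb addr0.
apply: IH => [i Hi e' He'|U HU' Hc].
  case/orP: (HL i Hi e' He'); last by rewrite /decided !in_cons => /orP [] ->; rewrite !orbT.
  rewrite in_cons => /orP [/eqP ->|->] //.
  by rewrite /decided !in_cons; case: b; rewrite eqxx ?orbT.
have E : U ++ (e, b) :: D =i ((e, b) :: U) ++ D.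
  by move=> x; rewrite !mem_cat !in_cons orbCA orbA.
have -> : true_coef_sum (U ++ (e, b) :: D) L = true_coef_sum (((e, b) :: U) ++ D) L.
  by apply: eq_bigr => i _; congr (if _ then _ else _); apply: eq_all => x; rewrite /holds E.
by apply: HU; [rewrite /= HU' | apply: consistent_eq_mem Hc].
Qed.

Lemma sum_projs_eq0 (L : seq (K * seq Ed)) (F : seq Ed) :
  (forall i, i \in L -> {subset i.2 <= F}) ->
  (forall U, map fst U = F -> consistent U -> true_coef_sum U L = 0) ->
  \sum_(i <- L) i.1 *: projs i.2 = 0.
Proof.
move=> HL HU.
have <- : lits [::] * \sum_(i <- L) i.1 *: projs i.2 = \sum_(i <- L) i.1 *: projs i.2.
  rewrite /= mulr_sumr; apply: eq_bigr => i _.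
  by rewrite -scalerAr (v0_projs (@mulrA A) _ AL_vert_idem AL_src_edge).
apply: (lits_sum_projs_eq0 (F := F)) => [i Hi e /(HL i Hi) ->|U HU'] //.
by rewrite cats0; apply: HU.
Qed.
End ALModel.

Section RangeInverse.
Variables (V : eqType) (Ed Cl : Type) (G : sepgraph V Ed Cl).

Definition rinv (v : V) : option Ed :=
  match excluded_middle_informative (exists e, rng G e = v) with
  | left H => Some (proj1_sig (constructive_indefinite_description _ H))
  | right _ => None
  end.

Lemma rinv_some v e : rinv v = Some e -> rng G e = v.
Proof.
rewrite /rinv; case: excluded_middle_informative => // H [<-].
exact: proj2_sig (constructive_indefinite_description _ H).
Qed.

Lemma rinv_none v : rinv v = None -> forall e, rng G e != v.
Proof.
rewrite /rinv; case: excluded_middle_informative => // H _ e.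
by apply/eqP => E; apply: H; exists e.
Qed.
End RangeInverse.

Variant chi_spec (P : R -> Prop) x : bool -> Prop :=
  | ChiT of P x : chi_spec P x true
  | ChiF of ~ P x : chi_spec P x false.

Lemma chiP (P : R -> Prop) x : chi_spec P x (chi P x).
Proof. by rewrite /chi; case: excluded_middle_informative => H; constructor. Qed.

Lemma chiT (P : R -> Prop) x : P x -> chi P x = true.
Proof. by case: chiP. Qed.

Lemma chiF (P : R -> Prop) x : ~ P x -> chi P x = false.
Proof. by case: chiP. Qed.

Section Operators.
Variables (V Ed Cl : countType) (G : sepgraph V Ed Cl) (S : Cl -> Prop) (B : bdata V Ed Cl).
Variable K : fieldType.
Hypothesis HC : is_construction G S B.
Variable v0 : V.
Hypothesis src_v0 : forall e, src G e = v0.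
Hypothesis rng_inj : injective (rng G).
Hypothesis rng_neq_src : forall e, rng G e <> src G e.
Local Notation D := (Dv (idx B)).
Local Notation Re := (Re G S B).

(* Restricted to operators fixing the zero function, the zero operator is absorbing, so
   the normal-form calculus applies to pi. *)
Definition zop := {f : (R -> K) -> R -> K | f (fun _ => 0) = (fun _ => 0)}.

Lemma zop_eq (f g : zop) : (forall phi x, sval f phi x = sval g phi x) -> f = g.
Proof.
case: f g => [f f0] [g g0] /= Hfg.
have E : f = g by apply: functional_extensionality => phi; apply: functional_extensionality.
by subst g; rewrite (proof_irrelevance _ f0 g0).
Qed.

Definition zop_mul (f g : zop) : zop.
Proof. by exists (fun phi => sval f (sval g phi)); rewrite (svalP g) (svalP f). Defined.

Definition zop0 : zop := exist _ (fun _ _ => 0) erefl.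

Lemma pi_gen0 g : pi_gen G S B g (fun _ => 0) = (fun _ => 0 :> K).
Proof. by apply: functional_extensionality => x; case: g => [v|e|e] /=; case: chi. Qed.

Definition pi_op g : zop := exist _ (pi_gen G S B g) (pi_gen0 g).

Local Infix "**" := zop_mul (at level 40, left associativity).
Local Notation pv v := (pi_op (GV Ed v)).
Local Notation pe e := (pi_op (GE V e)).
Local Notation ps e := (pi_op (GS V e)).

Lemma rng_neq_v0 e : rng G e != v0.
Proof. by apply/eqP; rewrite -(src_v0 e); apply: rng_neq_src. Qed.

Lemma Re_Dv0 e x : Re e x -> D v0 x.
Proof. by rewrite -(src_v0 e); apply: Re_Dv. Qed.

Lemma Dv_rng_v0 e x : D (rng G e) x -> ~ D v0 x.
Proof. by move=> H1 H2; move: (rng_neq_v0 e); rewrite (Dv_uniq HC H1 H2) eqxx. Qed.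

Lemma zop_mulA : associative zop_mul. Proof. by move=> *; apply: zop_eq. Qed.

Lemma zop_mul0 : right_zero zop0 zop_mul.
Proof. by move=> f; apply: zop_eq => phi y /=; rewrite (svalP f). Qed.

Lemma zop_0mul : left_zero zop0 zop_mul. Proof. by move=> *; apply: zop_eq. Qed.

Lemma pi_vert_idem v : pv v ** pv v = pv v.
Proof. by apply: zop_eq => phi x /=; case: chi. Qed.

Lemma pi_vert_orth v w : v != w -> pv v ** pv w = zop0.
Proof.
move=> ne; apply: zop_eq => phi x /=.
case: chiP => [Hv|//]; case: chiP => [Hw|//].
by move: ne; rewrite (Dv_uniq HC Hv Hw) eqxx.
Qed.

Lemma pi_src_edge e : pv v0 ** pe e = pe e.
Proof.
apply: zop_eq => phi x /=; case: (chiP (Re e)) => [H|_]; last by case: chi.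
by rewrite chiT //; apply: Re_Dv0 H.
Qed.

Lemma pi_edge_rng e : pe e ** pv (rng G e) = pe e.
Proof.
apply: zop_eq => phi x /=; case: (chiP (Re e)) => [H|//].
by rewrite chiT //; case: (Re_gi HC H).
Qed.

Lemma pi_rng_star e : pv (rng G e) ** ps e = ps e.
Proof. by apply: zop_eq => phi x /=; case: chi. Qed.

Lemma pi_star_src e : ps e ** pv v0 = ps e.
Proof.
apply: zop_eq => phi x /=; case: chiP => [H|//].
by rewrite chiT //; case: (Dv_fe HC H) => /Re_Dv0.
Qed.

Lemma pi_star_edge e : ps e ** pe e = pv (rng G e).
Proof.
apply: zop_eq => phi x /=; case: chiP => [H|//].
by case: (Dv_fe HC H) => H1 H2; rewrite chiT // H2.
Qed.

Local Notation nfop := (nf_val v0 zop_mul zop0 (fun v => pv v) (fun e => pe e) (fun e => ps e)).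

Lemma pi_word_val g t phi :
  pi_word G S B (g :: t) phi =
  sval (word_val zop_mul (fun v => pv v) (fun e => pe e) (fun e => ps e) g t) phi.
Proof.
elim: t g => [|h t IH] g; first by case: g.
by transitivity (pi_gen G S B g (pi_word G S B (h :: t) phi)); rewrite // IH; case: g.
Qed.

Lemma pi_word_nf g t :
  pi_word G S B (g :: t) = sval (nfop (nf_of_word v0 (rinv G) g t)).
Proof.
rewrite (nf_of_wordP zop_mulA zop_mul0 zop_0mul (@rinv_some _ _ _ G) (@rinv_none _ _ _ G)
  rng_neq_v0 rng_inj pi_vert_idem pi_vert_orth pi_src_edge pi_edge_rng pi_rng_star
  pi_star_src pi_star_edge).
by apply: functional_extensionality => phi; rewrite pi_word_val.
Qed.

Definition delta (t : R) : R -> K := fun x => if chi (fun w => w = t) x then 1 else 0.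

Lemma delta_eq t : delta t t = 1. Proof. by rewrite /delta chiT. Qed.

Lemma delta_neq t x : x <> t -> delta t x = 0. Proof. by move=> H; rewrite /delta chiF. Qed.

Definition in_Re (Q : seq Ed) y := all (fun e => chi (Re e) y) Q.

(* The point of [D_{r(e)}] sent to [y] by [f_e], when [a = Some e]. *)
Definition pull (a : option Ed) y := if a is Some e then gi B e y else y.

Definition opt_Re (a : option Ed) y : Prop := if a is Some e then Re e y else True.

Local Notation projs_op := (projs v0 zop_mul (fun v => pv v) (fun e => pe e) (fun e => ps e)).

Lemma pi_projs Q phi x :
  sval (projs_op Q) phi x = if chi (D v0) x && in_Re Q x then phi x else 0.
Proof.
elim: Q x => [|e Q IH] x /=; first by rewrite andbT.
case: (chiP (Re e)) => [H|_]; last by rewrite andbF.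
by case: (Re_gi HC H) => H1 H2; rewrite chiT // H2 IH (chiT (Re_Dv0 H)).
Qed.

Lemma pi_projs_edge b Q phi x :
  sval (edge_r zop_mul (fun e => pe e) b (projs_op Q)) phi x =
  if chi (D v0) x && in_Re Q x then
    (if b is Some f then (if chi (Re f) x then phi (gi B f x) else 0) else phi x)
  else 0.
Proof. by case: b => [f|] /=; rewrite pi_projs. Qed.

Lemma pull_Dv_inj e f x y : Re e x -> Re f y -> gi B e x = gi B f y -> e = f.
Proof.
move=> /(Re_gi HC) [De _] /(Re_gi HC) [Df _] E.
by apply: rng_inj; apply: (Dv_uniq HC De); rewrite E.
Qed.

Lemma pi_edge_delta b b' Q y : D v0 y -> opt_Re b y ->
  sval (edge_r zop_mul (fun e => pe e) b' (projs_op Q)) (delta (pull b y)) y =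
  if (b' == b) && in_Re Q y then 1 else 0.
Proof.
move=> Hy Hb; rewrite pi_projs_edge (chiT Hy) /=.
case: (in_Re Q y); rewrite ?andbT ?andbF //.
case: b Hb => [f|] Hb; case: b' => [f'|] /=.
- case: (chiP (Re f')) => [Hf'|Hnf']; last by case: eqP => // -[E]; case: Hnf'; rewrite E.
  case: eqP => [[->]|ne]; first by rewrite delta_eq.
  by apply: delta_neq => E; apply: ne; rewrite (pull_Dv_inj Hf' Hb E).
- by apply: delta_neq => E; case: (Re_gi HC Hb) => /Dv_rng_v0; rewrite -E.
- case: (chiP (Re f')) => [Hf'|//].
  by apply: delta_neq => E; case: (Re_gi HC Hf') => /Dv_rng_v0; rewrite E.
- exact: delta_eq.
Qed.

Lemma pi_cell_delta a b a' Q b' y : D v0 y -> opt_Re a y -> opt_Re b y ->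
  sval (nfop (NCell a' Q b')) (delta (pull b y)) (pull a y) =
  if (a' == a) && (b' == b) && in_Re Q y then 1 else 0.
Proof.
move=> Hy Ha Hb; rewrite /=.
case: a Ha => [e|] Ha; case: a' => [e'|] /=; last 1 first.
- exact: pi_edge_delta.
- have [De Hfe] := Re_gi HC Ha; case: (eqVneq e' e) => [->|ne].
    by rewrite chiT // Hfe pi_edge_delta // eqxx.
  rewrite chiF; last by move=> De'; move: ne; rewrite (rng_inj (Dv_uniq HC De' De)) eqxx.
  by case: eqP => // -[E]; move: ne; rewrite E eqxx.
- have [De _] := Re_gi HC Ha.
  by rewrite pi_projs_edge chiF //; apply: Dv_rng_v0 De.
- by rewrite chiF // => De'; apply: (Dv_rng_v0 De').
Qed.

Lemma pi_iso_delta a b w y : D v0 y -> opt_Re a y -> nf_wf v0 (rinv G) (NIso w) ->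
  sval (nfop (NIso w)) (delta (pull b y)) (pull a y) = 0.
Proof.
move=> Hy Ha /andP [Hw /eqP /rinv_none Hr] /=; rewrite chiF //.
case: a Ha => [e|] Ha /= Dw; last by move: Hw; rewrite (Dv_uniq HC Dw Hy) eqxx.
have [De _] := Re_gi HC Ha.
by move: (Hr e); rewrite (Dv_uniq HC De Dw) eqxx.
Qed.

Lemma pi_nf_delta_iso w n : w != v0 -> (forall e, rng G e != w) ->
  sval (nfop n) (delta (INR (idx B w))) (INR (idx B w)) =
  if n is NIso w' then (if w' == w then 1 else 0) else 0.
Proof.
have Dw : D w (INR (idx B w)) by split; [apply: Rle_refl | lra].
move=> Hw Hr; case: n => [|w'|a Q b] //=.
  case: (eqVneq w' w) => [->|ne]; first by rewrite chiT // delta_eq.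
  by rewrite chiF // => Dw'; move: ne; rewrite (Dv_uniq HC Dw' Dw) eqxx.
case: a => [e|] /=.
  by rewrite chiF // => De; move: (Hr e); rewrite (Dv_uniq HC De Dw) eqxx.
by rewrite pi_projs_edge chiF // => D0; move: Hw; rewrite (Dv_uniq HC Dw D0) eqxx.
Qed.
End Operators.

Lemma big_fibres_eq0 (T : Type) (kT : eqType) (Z : zmodType) (key : T -> kT)
    (F : T -> Z) (s : seq T) :
  (forall k, \sum_(i <- s | key i == k) F i = 0) -> \sum_(i <- s) F i = 0.
Proof.
have [n] := ubnP (size s); elim: n s => // n IH [|i0 s] /= Hs H; first by rewrite big_nil.
rewrite (bigID (fun i => key i == key i0)) /= H add0r -big_filter.
apply: IH => [|k]; first by rewrite /= eqxx size_filter (leq_ltn_trans (count_size _ _)).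
rewrite big_filter_cond; have [->|ne] := eqVneq k (key i0).
  by rewrite big_pred0 // => i; case: eqP.
rewrite -[RHS](H k); apply: eq_bigl => i.
by case: (eqVneq (key i) k) => [->|_]; rewrite ?andbT ?andbF.
Qed.

Section GenEq.
Variables (V Ed : eqType).

Definition gen_code (g : gen V Ed) : V + Ed + Ed :=
  match g with GV v => inl (inl v) | GE e => inl (inr e) | GS e => inr e end.

Definition gen_decode (c : V + Ed + Ed) : gen V Ed :=
  match c with inl (inl v) => GV Ed v | inl (inr e) => GE V e | inr e => GS V e end.

Lemma gen_codeK : cancel gen_code gen_decode. Proof. by case. Qed.
End GenEq.

HB.instance Definition _ (V Ed : eqType) := Equality.copy (gen V Ed) (can_type (@gen_codeK V Ed)).

Section Main.
Variables (V Ed Cl : countType) (G : sepgraph V Ed Cl) (S : Cl -> Prop).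
Variables (K : fieldType) (B : bdata V Ed Cl).
Hypothesis HC : is_construction G S B.
Variable v0 : V.
Hypothesis src_v0 : forall e, src G e = v0.
Hypothesis rng_inj : injective (rng G).
Hypothesis rng_neq_src : forall e, rng G e <> src G e.
Variable p : ncpoly K V Ed.
Hypothesis p_nc : no_const_term p.
Hypothesis p_pi0 : pi_zero G S B p.
Local Notation D := (Dv (idx B)).

Definition nf_of_seq (w : seq (gen V Ed)) : nf V Ed :=
  if w is g :: t then nf_of_word v0 (rinv G) g t else NZero.

Definition nf_key (n : nf V Ed) : option (V + (option Ed * option Ed)) :=
  match n with NZero => None | NIso w => Some (inl w) | NCell a _ b => Some (inr (a, b)) end.

Local Notation key cw := (nf_key (nf_of_seq cw.2)).

Definition cell_Q (cw : K * seq (gen V Ed)) : seq Ed :=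
  if nf_of_seq cw.2 is NCell _ Q _ then Q else [::].
Local Notation nfop := (nf_val v0 (@zop_mul K) (zop0 K) (fun v => pi_op G S B K (GV Ed v))
  (fun e => pi_op G S B K (GE V e)) (fun e => pi_op G S B K (GS V e))).

Lemma nf_of_seq_wf w : nf_wf v0 (rinv G) (nf_of_seq w).
Proof. by case: w => [|g t] //=; apply: nf_of_word_wf. Qed.

Lemma pi_poly_nf phi x : Xsp B x ->
  \sum_(cw <- p) cw.1 * sval (nfop (nf_of_seq cw.2)) phi x = 0.
Proof.
move=> Hx; rewrite -[RHS](p_pi0 phi Hx) /pi_poly; apply: eq_big_seq => -[c w] /(allP p_nc).
by case: w => [|g t] // _; rewrite (pi_word_nf K HC src_v0 rng_inj rng_neq_src).
Qed.

Lemma pi_poly_iso w : w != v0 -> (forall e, rng G e != w) ->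
  \sum_(cw <- p | key cw == Some (inl w)) cw.1 = 0.
Proof.
move=> Hw Hr; have Dw : D w (INR (idx B w)) by split; [apply: Rle_refl | lra].
rewrite -[RHS](pi_poly_nf (delta K (INR (idx B w))) (ex_intro _ w Dw)) big_mkcond.
apply: eq_bigr => cw _; rewrite (pi_nf_delta_iso K HC src_v0 _ Hw Hr).
case: (nf_of_seq cw.2) => [|w'|a Q b] /=; rewrite ?mulr0 //.
case: (eqVneq w' w) => [->|ne]; first by rewrite eqxx mulr1.
by rewrite mulr0; case: eqP => // -[E]; rewrite E eqxx in ne.
Qed.

Lemma pi_poly_cell a b y : D v0 y -> opt_Re G S B a y -> opt_Re G S B b y ->
  \sum_(cw <- p | key cw == Some (inr (a, b)))
     (if in_Re G S B (cell_Q cw) y then cw.1 else 0) = 0.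
Proof.
move=> Hy Ha Hb.
have Hx : Xsp B (pull B a y).
  by case: a Ha => [e /(Re_gi HC) [He _]|_]; [exists (rng G e) | exists v0].
rewrite -[RHS](pi_poly_nf (delta K (pull B b y)) Hx) big_mkcond.
apply: eq_bigr => cw _; have := nf_of_seq_wf cw.2; rewrite /cell_Q.
case: (nf_of_seq cw.2) => [|w|a' Q b'] Hwf; first by rewrite /= mulr0.
  by rewrite (pi_iso_delta K HC b Hy Ha Hwf) mulr0.
rewrite (pi_cell_delta K HC src_v0 rng_inj rng_neq_src a' Q b' Hy Ha Hb).
have -> : (Some (inr (a', b')) == Some (inr (a, b)) :> option (V + _)) = (a' == a) && (b' == b).
  by apply/eqP/andP => [[-> ->]|[/eqP -> /eqP ->]].
by case: (_ && _); case: in_Re; rewrite ?mulr1 ?mulr0.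
Qed.

Definition cell_terms a b : seq (K * seq Ed) :=
  [seq (cw.1, cell_edges a (cell_Q cw) b) | cw <- p & key cw == Some (inr (a, b))].

Definition cell_support a b : seq Ed := undup (cell_edges a (flatten (map cell_Q p)) b).

Lemma cell_Q_flatten cw : cw \in p -> {subset cell_Q cw <= flatten (map cell_Q p)}.
Proof. by move=> Hcw e He; apply/flattenP; exists (cell_Q cw) => //; apply: map_f. Qed.

Lemma mem_cell_support a b Q e : {subset Q <= flatten (map cell_Q p)} ->
  e \in cell_edges a Q b -> e \in cell_support a b.
Proof.
by move=> sQ; rewrite mem_undup /cell_edges !mem_cat => /or3P [->|/sQ ->|->]; rewrite ?orbT.
Qed.

Lemma cell_terms_support a b i : i \in cell_terms a b -> {subset i.2 <= cell_support a b}.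
Proof.
case/mapP => cw; rewrite mem_filter => /andP [_ Hcw] -> e.
exact/mem_cell_support/cell_Q_flatten.
Qed.

Lemma cell_terms_coef_eq0 a b U : map fst U = cell_support a b -> consistent G S U ->
  true_coef_sum U (cell_terms a b) = 0.
Proof.
move=> UF Uc; have [y [Hy HyU]] := realize_assignment HC src_v0 UF Uc.
have [Hab|Hnab] := boolP (all (holds U) (seq_of_opt a ++ seq_of_opt b)); last first.
  rewrite /true_coef_sum /cell_terms big_map big_filter big1 // => cw _ /=.
  move: Hnab; rewrite /cell_edges !all_cat.
  by case: (all _ (seq_of_opt a)); case: (all _ (seq_of_opt b)); rewrite ?andbF.
have Hend e : e \in seq_of_opt a ++ seq_of_opt b -> Re G S B e y.
  by move=> He; apply/HyU; [apply: (@mem_cell_support a b [::]) | apply: (allP Hab)].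
have Ha : opt_Re G S B a y by case E: a => //; apply: Hend; rewrite E mem_cat mem_head.
have Hb : opt_Re G S B b y by case E: b => //; apply: Hend; rewrite E mem_cat mem_head orbT.
rewrite -[RHS](pi_poly_cell Hy Ha Hb) /true_coef_sum /cell_terms big_map big_filter.
rewrite big_seq_cond [RHS]big_seq_cond; apply: eq_bigr => cw /andP [Hcw _] /=.
congr (if _ then _ else _); move: Hab; rewrite /cell_edges !all_cat => /andP [-> ->].
rewrite andbT; apply: eq_in_all => e He.
have /HyU HU : e \in cell_support a b.
  by apply: (mem_cell_support (cell_Q_flatten Hcw)); rewrite !mem_cat He orbT.
by case: chiP => H; [apply/HU | apply/negbTE/negP => /HU].
Qed.

Variables (A : algType K) (gv : V -> A) (ge gs : Ed -> A).
Hypothesis HM : AL_model G S gv ge gs.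
Hypothesis cl_surj : forall Y, exists e, cl G e = Y.
Hypothesis S_fin : forall Y, S Y -> fin_block G Y.
Local Notation nfA := (nf_val v0 *%R 0 gv ge gs).
Local Notation projsA := (projs v0 *%R gv ge gs).
Local Notation star_lA := (star_l *%R gs).
Local Notation edge_rA := (edge_r *%R ge).

Lemma AL_word_nf w : ~~ nilp w -> \prod_(g <- w) interp_gen gv ge gs g = nfA (nf_of_seq w).
Proof.
case: w => [|g t] // _.
rewrite /nf_of_seq (nf_of_wordP (@mulrA A) (@mulr0 A) (@mul0r A) (@rinv_some _ _ _ G)
  (@rinv_none _ _ _ G) (rng_neq_v0 src_v0 rng_neq_src) rng_inj (AL_vert_idem HM)
  (AL_vert_orth HM) (AL_src_edge HM src_v0) (AL_edge_rng HM) (AL_rng_star HM)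
  (AL_star_src HM src_v0) (AL_star_edge HM)).
elim: t g => [|h t IH] g /=; first by rewrite big_seq1; case: g.
by rewrite big_cons IH; case: g.
Qed.

Lemma AL_fibre_zero : \sum_(cw <- p | key cw == None) cw.1 *: nfA (nf_of_seq cw.2) = 0.
Proof. by rewrite big1 // => cw; case: (nf_of_seq cw.2) => //= _; rewrite scaler0. Qed.

Lemma AL_fibre_iso w :
  \sum_(cw <- p | key cw == Some (inl w)) cw.1 *: nfA (nf_of_seq cw.2) = 0.
Proof.
have [/andP [Hw /eqP/rinv_none Hr]|Hnw] := boolP ((w != v0) && (rinv G w == None)).
  rewrite (eq_bigr (fun cw => cw.1 *: gv w)) => [|cw].
    by rewrite -scaler_suml pi_poly_iso // scale0r.
  by case: (nf_of_seq cw.2) => //= w' /eqP [->].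
rewrite big1 // => cw; have := nf_of_seq_wf cw.2.
by case: (nf_of_seq cw.2) => //= w' Hwf /eqP [E]; rewrite -E Hwf in Hnw.
Qed.

Lemma star_l_sum (I : Type) a (r : seq I) (c : I -> K) (F : I -> A) :
  star_lA a (\sum_(i <- r) c i *: F i) = \sum_(i <- r) c i *: star_lA a (F i).
Proof. by case: a => [e|] //=; rewrite mulr_sumr; apply: eq_bigr => i _; rewrite scalerAr. Qed.

Lemma edge_r_sum (I : Type) b (r : seq I) (c : I -> K) (F : I -> A) :
  edge_rA b (\sum_(i <- r) c i *: F i) = \sum_(i <- r) c i *: edge_rA b (F i).
Proof. by case: b => [f|] //=; rewrite mulr_suml; apply: eq_bigr => i _; rewrite scalerAl. Qed.

Lemma AL_fibre_cellE a b :
  \sum_(cw <- p | key cw == Some (inr (a, b))) cw.1 *: nfA (nf_of_seq cw.2) =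
  star_lA a (edge_rA b (\sum_(i <- cell_terms a b) i.1 *: projsA i.2)).
Proof.
rewrite edge_r_sum star_l_sum big_map big_filter; apply: eq_bigr => cw.
rewrite /cell_Q; case: (nf_of_seq cw.2) => [//|//|a' Q b' /eqP [-> ->]].
by rewrite (nf_val_cell 0 (@mulrA A) (AL_vert_idem HM) (AL_src_edge HM src_v0)
  (AL_edge_rng HM) (AL_rng_star HM) (AL_star_edge HM)).
Qed.

Lemma AL_fibre_cell a b :
  \sum_(cw <- p | key cw == Some (inr (a, b))) cw.1 *: nfA (nf_of_seq cw.2) = 0.
Proof.
rewrite AL_fibre_cellE (sum_projs_eq0 HM src_v0 cl_surj S_fin (@cell_terms_support a b)
  (@cell_terms_coef_eq0 a b)).
by rewrite (edge_r0 (@mul0r A)) (star_l0 (@mulr0 A)).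
Qed.

Lemma AL_poly_eq0 : interp_poly gv ge gs p = 0.
Proof.
rewrite /interp_poly (eq_big_seq (fun cw => cw.1 *: nfA (nf_of_seq cw.2))) => [|cw Hcw].
  apply: (@big_fibres_eq0 _ _ _ (fun cw : K * seq (gen V Ed) => key cw)) => -[[w|[a b]]|].
  - exact: AL_fibre_iso.
  - exact: AL_fibre_cell.
  - exact: AL_fibre_zero.
by rewrite AL_word_nf // (allP p_nc).
Qed.
End Main.

Theorem theorem4p3
  (V Ed Cl : countType) (G : sepgraph V Ed Cl) (S : Cl -> Prop)
  (K : fieldType) (B : bdata V Ed Cl) :
  is_sepgraph G ->
  (forall Y, S Y -> fin_block G Y) ->
  (exists v0 : V, forall e, src G e = v0) ->
  (forall e f, rng G e = rng G f -> e = f) ->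
  (forall e, rng G e <> src G e) ->
  is_construction G S B ->
  forall p : ncpoly K V Ed, no_const_term p ->
    pi_zero G S B p -> zero_in_AL G S p.
Proof.
move=> [cl_surj _] S_fin [v0 src_v0] rng_inj rng_neq_src HC p p_nc p_pi0 A gv ge gs HM.
exact: (AL_poly_eq0 HC src_v0 rng_inj rng_neq_src p_nc p_pi0 HM cl_surj S_fin).
Qed.
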